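(* For $m,n\in\mathbb Z$ and $r\ge0$ define $$b_{m,n}(r):=(\pi q^{-2})^{(n-r)\# r}\sum_{s=0}^{r-1}(\pi q^2)^{n-r+m(r-s-1)}q^{(m-n+r-1)(n-r+s+1)+(n-r)s}\begin{bmatrix} m+s\\ n-r+s+1\end{bmatrix}_{q,\pi}\begin{bmatrix} n-r+s\\ s\end{bmatrix}_{q,\pi},$$ $$c_{m,n}(r):=(\pi q^{-2})^{(n-r)\# r}q^{(m-n+r)n+(n-r)r}\begin{bmatrix} m+r\\ n\end{bmatrix}_{q,\pi}\begin{bmatrix} n\\ r\end{bmatrix}_{q,\pi}.$$ Then $c_{m,n}(r)=b_{m,n}(r)+b_{m,n}(r+1)$ for all $m,n\in\mathbb Z$ and $r\ge0$. In particular (taking $m=n-r$), for $0\le r\le n$, $$q^{(n-r)r}\begin{bmatrix} n\\ r\end{bmatrix}_{q,\pi}=\sum_{s=0}^r(\pi q^2)^{(n-r)(r-s)}q^{(n-r-1)s}\begin{bmatrix} n-r+s-1\\ s\end{bmatrix}_{q,\pi}.$$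
   Context: Work in $\mathbb Q(q)^\pi:=\mathbb Q(q)[\pi]/(\pi^2-1)$. For $n\in\mathbb Z$, $[n]_{q,\pi}:=\frac{(\pi q)^n-q^{-n}}{\pi q-q^{-1}}$, $[r]^!_{q,\pi}:=[r]_{q,\pi}\cdots[1]_{q,\pi}$, and for $n\in\mathbb Z$, $r\ge0$, $\begin{bmatrix} n\\ r\end{bmatrix}_{q,\pi}:=\frac{[n]_{q,\pi}\cdots[n-r+1]_{q,\pi}}{[r]^!_{q,\pi}}$, with $\begin{bmatrix} n\\ r\end{bmatrix}_{q,\pi}:=0$ if $r<0$. For $n\in\mathbb Z$, $r\ge 0$, $n\# r:=n+(n+1)+\cdots+(n+r-1)=nr+\binom r2$. *)

From HB Require Import structures.
From mathcomp Require Import all_boot all_order all_algebra.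
From mathcomp Require Import ring.
Set Implicit Arguments. Unset Strict Implicit. Unset Printing Implicit Defensive.
Import Order.TTheory GRing.Theory Num.Theory.
Local Open Scope ring_scope.

Definition Qq : fieldType := {fraction {poly rat}}.

(* Q(q)^pi := Q(q)[pi]/(pi^2 - 1): an element a + b*pi is stored as (a, b),
   using the Q(q)-basis {1, pi} of the quotient ring. *)
Record Qpi := QPi { qpi_re : Qq; qpi_im : Qq }.

Definition Qpi_to (x : Qpi) := (qpi_re x, qpi_im x).
Definition Qpi_of (p : Qq * Qq) := QPi p.1 p.2.
Lemma Qpi_toK : cancel Qpi_to Qpi_of. Proof. by case. Qed.
HB.instance Definition _ := Equality.copy Qpi (can_type Qpi_toK).
HB.instance Definition _ := Choice.copy Qpi (can_type Qpi_toK).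

Definition qpi0 := QPi 0 0.
Definition qpi1 := QPi 1 0.
Definition qpi_add x y := QPi (qpi_re x + qpi_re y) (qpi_im x + qpi_im y).
Definition qpi_opp x := QPi (- qpi_re x) (- qpi_im x).
(* (a + b pi)(c + d pi) = (ac + bd) + (ad + bc) pi, since pi^2 = 1 *)
Definition qpi_mul x y :=
  QPi (qpi_re x * qpi_re y + qpi_im x * qpi_im y)
      (qpi_re x * qpi_im y + qpi_im x * qpi_re y).

Lemma qpi_eq a b c d : a = c -> b = d -> QPi a b = QPi c d.
Proof. by move=> -> ->. Qed.

Fact qpi_addA : associative qpi_add.
Proof. by move=> [? ?] [? ?] [? ?]; apply: qpi_eq => /=; ring. Qed.
Fact qpi_addC : commutative qpi_add.
Proof. by move=> [? ?] [? ?]; apply: qpi_eq => /=; ring. Qed.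
Fact qpi_add0 : left_id qpi0 qpi_add.
Proof. by move=> [? ?]; apply: qpi_eq => /=; ring. Qed.
Fact qpi_addN : left_inverse qpi0 qpi_opp qpi_add.
Proof. by move=> [? ?]; apply: qpi_eq => /=; ring. Qed.
HB.instance Definition _ := GRing.isZmodule.Build Qpi
  qpi_addA qpi_addC qpi_add0 qpi_addN.

Fact qpi_mulA : associative qpi_mul.
Proof. by move=> [? ?] [? ?] [? ?]; apply: qpi_eq => /=; ring. Qed.
Fact qpi_mulC : commutative qpi_mul.
Proof. by move=> [? ?] [? ?]; apply: qpi_eq => /=; ring. Qed.
Fact qpi_mul1 : left_id qpi1 qpi_mul.
Proof. by move=> [? ?]; apply: qpi_eq => /=; ring. Qed.
Fact qpi_mulDl : left_distributive qpi_mul qpi_add.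
Proof. by move=> [? ?] [? ?] [? ?]; apply: qpi_eq => /=; ring. Qed.
Fact qpi_one_neq0 : qpi1 != qpi0.
Proof. by apply/eqP => -[]; apply/eqP; exact: oner_neq0. Qed.
HB.instance Definition _ := GRing.Zmodule_isComNzRing.Build Qpi
  qpi_mulA qpi_mulC qpi_mul1 qpi_mulDl qpi_one_neq0.

Definition qpi_unit : {pred Qpi} :=
  fun x => qpi_re x ^+ 2 - qpi_im x ^+ 2 != 0.
Definition qpi_inv (x : Qpi) : Qpi :=
  if x \in qpi_unit then
    QPi (qpi_re x / (qpi_re x ^+ 2 - qpi_im x ^+ 2))
        (- qpi_im x / (qpi_re x ^+ 2 - qpi_im x ^+ 2))
  else x.

Fact qpi_mulV : {in qpi_unit, left_inverse 1 qpi_inv *%R}.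
Proof.
move=> [a b] ux; rewrite /qpi_inv ux; rewrite unfold_in in ux.
change (QPi (a / (a ^+ 2 - b ^+ 2) * a + - b / (a ^+ 2 - b ^+ 2) * b)
            (a / (a ^+ 2 - b ^+ 2) * b + - b / (a ^+ 2 - b ^+ 2) * a) = QPi 1 0).
apply: qpi_eq.
  transitivity ((a ^+ 2 - b ^+ 2) * (a ^+ 2 - b ^+ 2)^-1); first by ring.
  by rewrite mulfV.
transitivity (0 * (a ^+ 2 - b ^+ 2)^-1); first by ring.
by rewrite mul0r.
Qed.
Fact qpi_unitPl x y : y * x = 1 -> x \in qpi_unit.
Proof.
case: x y => [a b] [c d].
change (QPi (c * a + d * b) (c * b + d * a) = QPi 1 0 -> a ^+ 2 - b ^+ 2 != 0).
case=> e1 e2; apply/eqP => h.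
have : (c ^+ 2 - d ^+ 2) * (a ^+ 2 - b ^+ 2) = 1.
  have -> : (c ^+ 2 - d ^+ 2) * (a ^+ 2 - b ^+ 2) =
    (c * a + d * b) ^+ 2 - (c * b + d * a) ^+ 2 by ring.
  by rewrite e1 e2; ring.
by rewrite h mulr0 => /eqP; rewrite eq_sym oner_eq0.
Qed.
Fact qpi_inv_out : {in [predC qpi_unit], qpi_inv =1 id}.
Proof. by move=> x; rewrite inE /qpi_inv => /negbTE ->. Qed.
HB.instance Definition _ := GRing.ComNzRing_hasMulInverse.Build Qpi
  qpi_mulV qpi_unitPl qpi_inv_out.

Definition q : Qpi := QPi (tofrac 'X) 0.
Definition Pi : Qpi := QPi 0 1.

Definition qint (n : int) : Qpi :=
  ((Pi * q) ^ n - q ^ (- n)) / (Pi * q - q^-1).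

Definition qfact (r : nat) : Qpi := \prod_(1 <= i < r.+1) qint i%:Z.

Definition qbinom (n r : int) : Qpi :=
  match r with
  | Posz k => (\prod_(i < k) qint (n - i%:Z)) / qfact k
  | Negz _ => 0
  end.

(* n # r = n + (n+1) + ... + (n+r-1) = n r + binom(r,2) *)
Definition sharp (n : int) (r : nat) : int := n * r%:Z + ('C(r, 2))%:Z.

Definition b_mn (m n : int) (r : nat) : Qpi :=
  (Pi * q ^ (-2)) ^ sharp (n - r%:Z) r *
  \sum_(s < r)
    (Pi * q ^+ 2) ^ (n - r%:Z + m * (r%:Z - s%:Z - 1)) *
    q ^ ((m - n + r%:Z - 1) * (n - r%:Z + s%:Z + 1) + (n - r%:Z) * s%:Z) *
    qbinom (m + s%:Z) (n - r%:Z + s%:Z + 1) *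
    qbinom (n - r%:Z + s%:Z) s%:Z.

Definition c_mn (m n : int) (r : nat) : Qpi :=
  (Pi * q ^ (-2)) ^ sharp (n - r%:Z) r *
  q ^ ((m - n + r%:Z) * n + (n - r%:Z) * r%:Z) *
  qbinom (m + r%:Z) n * qbinom n r%:Z.

From HB Require Import structures.
From mathcomp Require Import all_boot all_order all_algebra.
From mathcomp Require Import ring zify.
Set Implicit Arguments. Unset Strict Implicit. Unset Printing Implicit Defensive.
Import Order.TTheory GRing.Theory Num.Theory.
Local Open Scope ring_scope.

(* Peeling the top summand off b_{m,n}(r+1) gives
   b_{m,n}(r+1) = (top term) + pi^(n-1+m) q^(2m-2(n-1)) b_{m,n-1}(r), and the
   (q,pi)-Pascal rule [x, j] = q^-j [x-1, j] + (pi q)^(x-j) [x-1, j-1], applied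
   to both binomials of c_{m,n}(r+1), gives the matching decomposition of
   c_{m,n}(r+1) with c_{m,n-1}(r) in place of b_{m,n-1}(r) + b_{m,n-1}(r+1);
   induction on r, for all n at once, concludes.  For m = n - r every summand
   of b_{m,n}(r) contains [n-r+s, n-r+s+1] = 0, and the summands of b_{m,n}(r+1)
   contain [n-r+s, n-r+s] = 1, which yields the expansion of [n, r]. *)

Lemma qpi_mulE (x y : Qpi) :
  x * y = QPi (qpi_re x * qpi_re y + qpi_im x * qpi_im y)
              (qpi_re x * qpi_im y + qpi_im x * qpi_re y).
Proof. by []. Qed.

Definition pi_eval (e : Qq) (x : Qpi) : Qq := qpi_re x + e * qpi_im x.

Section PiEval.
Variable e : Qq.
Hypothesis e2 : e ^+ 2 = 1.

Lemma pi_eval1 : pi_eval e 1 = 1.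
Proof. by rewrite /pi_eval /= mulr0 addr0. Qed.

Lemma pi_evalB x y : pi_eval e (x - y) = pi_eval e x - pi_eval e y.
Proof. by case: x y => a b [c d]; rewrite /pi_eval /=; ring. Qed.

Lemma pi_evalM x y : pi_eval e (x * y) = pi_eval e x * pi_eval e y.
Proof.
case: x y => a b [c d]; rewrite /pi_eval qpi_mulE /=.
transitivity (a * c + e * (a * d + b * c) + e ^+ 2 * (b * d)); last by ring.
by rewrite e2; ring.
Qed.

Lemma pi_evalX x k : pi_eval e (x ^+ k) = pi_eval e x ^+ k.
Proof. by elim: k => [|k IHk]; rewrite ?pi_eval1 // !exprS pi_evalM IHk. Qed.

Lemma pi_evalV x : x \is a GRing.unit -> pi_eval e x^-1 = (pi_eval e x)^-1.
Proof.
move=> ux; have inv_x : pi_eval e x^-1 * pi_eval e x = 1.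
  by rewrite -pi_evalM mulVr // pi_eval1.
have x_neq0 : pi_eval e x != 0.
  by apply/eqP => x0; move: inv_x; rewrite x0 mulr0 => /eqP; rewrite eq_sym oner_eq0.
by apply: (mulIf x_neq0); rewrite inv_x mulVf.
Qed.

Lemma pi_eval_Pi : pi_eval e Pi = e.
Proof. by rewrite /pi_eval /= mulr1 add0r. Qed.

Lemma pi_eval_q : pi_eval e q = tofrac 'X.
Proof. by rewrite /pi_eval /= mulr0 addr0. Qed.

End PiEval.

(* Q(q)^pi is isomorphic to Q(q) x Q(q) through the specialisations pi = 1, pi = -1. *)
Lemma qpi_unit_eval (x : Qpi) :
  pi_eval 1 x != 0 -> pi_eval (-1) x != 0 -> x \is a GRing.unit.
Proof.
move=> x1 xN1; have -> : (x \is a GRing.unit) = (qpi_re x ^+ 2 - qpi_im x ^+ 2 != 0).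
  by [].
have -> : qpi_re x ^+ 2 - qpi_im x ^+ 2 = pi_eval 1 x * pi_eval (-1) x.
  by rewrite /pi_eval; ring.
exact: mulf_neq0 x1 xN1.
Qed.

Lemma q_unit : q \is a GRing.unit.
Proof. by apply: qpi_unit_eval; rewrite pi_eval_q tofrac_eq0 polyX_eq0. Qed.

Lemma mulPiPi : Pi * Pi = 1.
Proof. by rewrite qpi_mulE /=; apply: qpi_eq; ring. Qed.

Lemma Pi_unit : Pi \is a GRing.unit.
Proof. by apply/unitrPr; exists Pi; rewrite mulPiPi. Qed.

Lemma frac_monomial_sub_inv_neq0 (c : rat) (k : nat) : (0 < k)%N ->
  (tofrac c%:P * tofrac 'X) ^+ k - (tofrac 'X ^+ k)^-1 != 0 :> Qq.
Proof.
move=> k_gt0; have Xk_neq0 : tofrac 'X ^+ k != 0 :> Qq.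
  by rewrite expf_neq0 // tofrac_eq0 polyX_eq0.
rewrite subr_eq0; apply: contraTneq isT => /(congr1 ( *%R^~ (tofrac 'X ^+ k))).
rewrite mulVf // -!tofracM -!tofracXn -tofracM -tofrac1 => /eqP.
rewrite tofrac_eq => /eqP /(congr1 (fun p : {poly rat} => p`_0)).
rewrite exprMn -mulrA -exprD -polyC_exp coefCM coefXn coef1 /=.
by rewrite -(prednK k_gt0) addSn mulr0 => /esym/eqP; rewrite oner_eq0.
Qed.

Lemma qnum_unit (k : nat) : (0 < k)%N ->
  (Pi * q) ^+ k - (q ^+ k)^-1 \is a GRing.unit.
Proof.
move=> k_gt0.
have qnum_eval e : e ^+ 2 = 1 -> pi_eval e ((Pi * q) ^+ k - (q ^+ k)^-1) =
    (e * tofrac 'X) ^+ k - (tofrac 'X ^+ k)^-1.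
  move=> e2; rewrite pi_evalB (pi_evalV e2 (unitrX k q_unit)) !(pi_evalX e2).
  by rewrite (pi_evalM e2) pi_eval_Pi pi_eval_q.
apply: qpi_unit_eval; rewrite qnum_eval ?sqrrN ?expr1n //.
  by rewrite -tofrac1 -polyC1 frac_monomial_sub_inv_neq0.
by rewrite -tofrac1 -tofracN -polyC1 -polyCN frac_monomial_sub_inv_neq0.
Qed.

(* Locked, so that [ring] treats the monomials pi^i q^j as atoms; their
   exponents are compared separately through [eq_piq]. *)
Fact piq_key : unit. Proof. exact: tt. Qed.
Definition piq_def (i j : int) : Qpi := Pi ^ i * q ^ j.
Definition piq := locked_with piq_key piq_def.

Lemma piqE i j : piq i j = Pi ^ i * q ^ j.
Proof. by rewrite /piq unlock. Qed.

Lemma piq_unit i j : piq i j \is a GRing.unit.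
Proof. by rewrite piqE unitrM !unitrXz // ?Pi_unit ?q_unit. Qed.

Lemma piq00 : piq 0 0 = 1.
Proof. by rewrite piqE !expr0z mul1r. Qed.

Lemma piqM i j k l : piq i j * piq k l = piq (i + k) (j + l).
Proof. by rewrite !piqE (exprzDr Pi_unit) (exprzDr q_unit); ring. Qed.

Lemma eq_piq i i' j j' k : i = i' + 2 * k -> j = j' -> piq i j = piq i' j'.
Proof.
move=> -> ->; rewrite !piqE (exprzDr Pi_unit) -exprz_exp.
have -> : Pi ^ 2 = 1 by rewrite -exprnP expr2 mulPiPi.
by rewrite exp1rz mulr1.
Qed.

Lemma q_piq e : q ^ e = piq 0 e.
Proof. by rewrite piqE expr0z mul1r. Qed.

Lemma Pi_q_piq e : (Pi * q) ^ e = piq e e.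
Proof. by rewrite piqE exprMz_comm ?Pi_unit ?q_unit //; exact: mulrC. Qed.

Lemma Pi_qn_piq e k : (Pi * q ^ k) ^ e = piq e (k * e).
Proof.
rewrite exprMz_comm ?Pi_unit ?unitrXz ?q_unit //; last exact: mulrC.
by rewrite piqE exprz_exp mulrC.
Qed.

Lemma qint_unit (k : nat) : (0 < k)%N -> qint k \is a GRing.unit.
Proof.
move=> k_gt0; have := qnum_unit k_gt0; have := qnum_unit (ltn0Sn 0).
rewrite !expr1 !exprnP invr_expz => den_unit num_unit.
by rewrite /qint unitrM unitrV num_unit den_unit.
Qed.

Lemma qfactS k : qfact k.+1 = qfact k * qint k.+1.
Proof. by rewrite /qfact big_nat_recr. Qed.

Lemma qfact_unit k : qfact k \is a GRing.unit.
Proof.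
elim: k => [|k IHk]; first by rewrite /qfact big_geq ?unitr1.
by rewrite qfactS unitrM IHk qint_unit.
Qed.

Lemma qint_split x j :
  qint x = piq 0 (- j) * qint (x - j) + piq (x - j) (x - j) * qint j.
Proof.
rewrite /qint -q_piq -Pi_q_piq.
have -> : (Pi * q) ^ x = (Pi * q) ^ (x - j) * (Pi * q) ^ j.
  by rewrite -exprzDr ?unitrM ?Pi_unit ?q_unit // subrK.
have -> : q ^ (- x) = q ^ (- j) * q ^ (- (x - j)).
  by rewrite -exprzDr ?q_unit //; congr (_ ^ _); ring.
by ring.
Qed.

Lemma qbinom0 x : qbinom x 0 = 1.
Proof. by rewrite /qbinom /= big_ord0 /qfact big_geq ?divr1. Qed.

Lemma qbinom_pascal x j : qbinom x j =
  piq 0 (- j) * qbinom (x - 1) j + piq (x - j) (x - j) * qbinom (x - 1) (j - 1).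
Proof.
case: j => [[|k]|k].
- by rewrite !qbinom0 oppr0 piq00 subr0 mulr0 addr0 mulr1.
- rewrite (_ : k.+1%:Z - 1 = k); last by lia.
  rewrite /qbinom big_ord_recl big_ord_recr /= qfactS subr0.
  set Q := \prod_(i < k) qint (x - 1 - i%:Z).
  have -> : \prod_(i < k) qint (x - (bump 0 i)%:Z) = Q.
    by apply: eq_bigr => i _; congr qint; rewrite /bump /= add1n; lia.
  rewrite (qint_split x k.+1%:Z) (_ : x - 1 - k%:Z = x - k.+1%:Z); last by lia.
  have inv_qint : qint k.+1 * (qint k.+1)^-1 = 1 by rewrite divrr ?qint_unit.
  rewrite invrM ?qfact_unit ?qint_unit // -[in RHS](mulr1 (Q / qfact k)) -inv_qint.
  by ring.
- by rewrite (_ : Negz k - 1 = Negz k.+1) ?mulr0 ?addr0 //; rewrite !NegzE; lia.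
Qed.

Lemma qint0 : qint 0 = 0.
Proof. by rewrite /qint oppr0 !expr0z subrr mul0r. Qed.

Lemma qbinom_diag k : 0 <= k -> qbinom k k = 1.
Proof.
case: k => // k _; rewrite /qbinom.
have -> : \prod_(i < k) qint (k%:Z - i%:Z) = qfact k.
  rewrite /qfact big_add1 /= big_mkord (reindex_inj rev_ord_inj) /=.
  by apply: eq_bigr => i _; congr qint; have := ltn_ord i; lia.
by rewrite divrr // qfact_unit.
Qed.

Lemma qbinom_eq0 n r : 0 <= n -> n < r -> qbinom n r = 0.
Proof.
case: n r => // j [k|//] _ lt_jk; rewrite /qbinom.
have jk : (j < k)%N by lia.
by rewrite (bigD1 (Ordinal jk)) //= subrr qint0 !mul0r.
Qed.

Definition c_monomial (m n : int) (r : nat) : Qpi :=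
  piq (sharp (n - r%:Z) r)
      (-2 * sharp (n - r%:Z) r + ((m - n + r%:Z) * n + (n - r%:Z) * r%:Z)).

Definition b_monomial (m n : int) (r s : nat) : Qpi :=
  piq (sharp (n - r%:Z) r + (n - r%:Z + m * (r%:Z - s%:Z - 1)))
      (-2 * sharp (n - r%:Z) r + 2 * (n - r%:Z + m * (r%:Z - s%:Z - 1)) +
       ((m - n + r%:Z - 1) * (n - r%:Z + s%:Z + 1) + (n - r%:Z) * s%:Z)).

Definition b_term (m n : int) (r s : nat) : Qpi :=
  b_monomial m n r s *
  qbinom (m + s%:Z) (n - r%:Z + s%:Z + 1) * qbinom (n - r%:Z + s%:Z) s%:Z.

Lemma c_mnE m n r :
  c_mn m n r = c_monomial m n r * qbinom (m + r%:Z) n * qbinom n r%:Z.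
Proof.
rewrite /c_mn Pi_qn_piq q_piq piqM; congr (_ * qbinom _ _ * qbinom _ _).
by apply: (eq_piq (k := 0)); ring.
Qed.

Lemma b_mnE m n r : b_mn m n r = \sum_(s < r) b_term m n r s.
Proof.
rewrite /b_mn mulr_sumr; apply: eq_bigr => s _.
rewrite [q ^+ 2]exprnP !Pi_qn_piq q_piq !(mulrA (piq _ _)) !piqM.
congr (_ * qbinom _ _ * qbinom _ _).
by apply: (eq_piq (k := 0)); ring.
Qed.

Lemma b_mn0 m n : b_mn m n 0 = 0.
Proof. by rewrite b_mnE big_ord0. Qed.

Lemma b_monomial_predn m n r s : b_monomial m n r.+1 s =
  piq (n - 1 + m) (2 * m - 2 * (n - 1)) * b_monomial m (n - 1) r s.
Proof.
rewrite /b_monomial piqM; apply: (eq_piq (k := 0));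
  by rewrite /sharp binS bin1 PoszD intS; ring.
Qed.

Lemma b_mnS m n r : b_mn m n r.+1 =
  b_term m n r.+1 r + piq (n - 1 + m) (2 * m - 2 * (n - 1)) * b_mn m (n - 1) r.
Proof.
rewrite !b_mnE big_ord_recr /= addrC mulr_sumr; congr (_ + _).
apply: eq_bigr => s _; rewrite /b_term b_monomial_predn.
rewrite (_ : n - r.+1%:Z = n - 1 - r%:Z); last by lia.
by rewrite !mulrA.
Qed.

Lemma c_mn_pascal m n r : c_mn m n r.+1 =
  b_term m n r.+1 r + b_term m n r.+2 r.+1 +
  piq (n - 1 + m) (2 * m - 2 * (n - 1)) * c_mn m (n - 1) r.
Proof.
have monomial_split1 : b_monomial m n r.+2 r.+1 =
    c_monomial m n r.+1 * piq 0 (- r.+1%:Z).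
  rewrite /b_monomial /c_monomial piqM; apply: (eq_piq (k := n - r%:Z - 2));
  by rewrite /sharp !binS !bin1 ?bin0 !PoszD !intS; ring.
have monomial_split2 : b_monomial m n r.+1 r =
    c_monomial m n r.+1 * piq (n - r.+1%:Z) (n - r.+1%:Z) * piq 0 (- n).
  rewrite /b_monomial /c_monomial !piqM; apply: (eq_piq (k := 0));
  by rewrite /sharp !binS !bin1 ?bin0 !PoszD !intS; ring.
have monomial_split3 :
    piq (n - 1 + m) (2 * m - 2 * (n - 1)) * c_monomial m (n - 1) r =
    c_monomial m n r.+1 * piq (n - r.+1%:Z) (n - r.+1%:Z) *
    piq (m + r.+1%:Z - n) (m + r.+1%:Z - n).
  rewrite /c_monomial !piqM; apply: (eq_piq (k := 0));
  by rewrite /sharp !binS !bin1 ?bin0 !PoszD !intS; ring.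
rewrite !c_mnE /b_term monomial_split1 monomial_split2.
rewrite !(mulrA (piq (n - 1 + m) _)) monomial_split3.
rewrite (_ : n - r.+1%:Z + r%:Z + 1 = n); last by lia.
rewrite (_ : n - r.+2%:Z + r.+1%:Z + 1 = n); last by lia.
rewrite (_ : n - r.+1%:Z + r%:Z = n - 1); last by lia.
rewrite (_ : n - r.+2%:Z + r.+1%:Z = n - 1); last by lia.
rewrite (qbinom_pascal n r.+1%:Z) (qbinom_pascal (m + r.+1%:Z) n).
rewrite (_ : r.+1%:Z - 1 = r%:Z); last by lia.
rewrite (_ : m + r.+1%:Z - 1 = m + r%:Z); last by lia.
by ring.
Qed.

Theorem c_mn_sum_b_mn m n r : c_mn m n r = b_mn m n r + b_mn m n r.+1.
Proof.
elim: r n => [|r IHr] n.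
  rewrite b_mn0 add0r b_mnS b_mn0 mulr0 addr0 c_mnE /b_term !qbinom0 !mulr1.
  rewrite !addr0 subrK; congr (_ * _); rewrite /c_monomial /b_monomial.
  by apply: (eq_piq (k := 1 - n)); rewrite /sharp ?bin0 ?bin1; ring.
rewrite (b_mnS m n r) (b_mnS m n r.+1) addrACA -mulrDr -IHr.
by rewrite c_mn_pascal.
Qed.

Lemma b_mn_sub_eq0 n r : r%:Z <= n -> b_mn (n - r%:Z) n r = 0.
Proof.
move=> le_rn; rewrite b_mnE big1 // => s _.
by rewrite /b_term qbinom_eq0 ?mulr0 ?mul0r //; lia.
Qed.

Lemma b_term_sub_diag n r (s : nat) : r%:Z <= n -> b_term (n - r%:Z) n r.+1 s =
  piq (sharp (n - r%:Z) r) (-2 * sharp (n - r%:Z) r) *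
  ((Pi * q ^+ 2) ^ ((n - r%:Z) * (r%:Z - s%:Z)) * q ^ ((n - r%:Z - 1) * s%:Z) *
   qbinom (n - r%:Z + s%:Z - 1) s%:Z).
Proof.
move=> le_rn; rewrite /b_term [q ^+ 2]exprnP Pi_qn_piq q_piq.
rewrite !(mulrA (piq _ _)) !piqM.
rewrite (_ : n - r.+1%:Z + s%:Z + 1 = n - r%:Z + s%:Z); last by lia.
rewrite (_ : n - r.+1%:Z + s%:Z = n - r%:Z + s%:Z - 1); last by lia.
rewrite qbinom_diag ?mulr1; last by lia.
congr (_ * qbinom _ _); rewrite /b_monomial; apply: (eq_piq (k := n - r%:Z - 1));
  by rewrite /sharp !binS !bin1 ?bin0 !PoszD !intS; ring.
Qed.

Theorem qbinom_expansion n r : r%:Z <= n ->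
  q ^ ((n - r%:Z) * r%:Z) * qbinom n r%:Z =
  \sum_(s < r.+1) (Pi * q ^+ 2) ^ ((n - r%:Z) * (r%:Z - s%:Z)) *
    q ^ ((n - r%:Z - 1) * s%:Z) * qbinom (n - r%:Z + s%:Z - 1) s%:Z.
Proof.
move=> le_rn; have := c_mn_sum_b_mn (n - r%:Z) n r.
rewrite b_mn_sub_eq0 // add0r c_mnE subrK qbinom_diag ?mulr1; last by lia.
rewrite b_mnE => expansion.
apply: (mulrI (piq_unit (sharp (n - r%:Z) r) (-2 * sharp (n - r%:Z) r))).
rewrite mulr_sumr q_piq mulrA piqM.
rewrite (_ : piq _ _ = c_monomial (n - r%:Z) n r); last first.
  by rewrite /c_monomial; apply: (eq_piq (k := 0)); ring.
by rewrite expansion; apply: eq_bigr => s _; rewrite b_term_sub_diag.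
Qed.

Theorem mainTheorem3 :
  (forall (m n : int) (r : nat), c_mn m n r = b_mn m n r + b_mn m n r.+1) /\
  (forall (n : int) (r : nat), r%:Z <= n ->
     q ^ ((n - r%:Z) * r%:Z) * qbinom n r%:Z =
     \sum_(s < r.+1)
       (Pi * q ^+ 2) ^ ((n - r%:Z) * (r%:Z - s%:Z)) *
       q ^ ((n - r%:Z - 1) * s%:Z) *
       qbinom (n - r%:Z + s%:Z - 1) s%:Z).
Proof. by split; [exact: c_mn_sum_b_mn | exact: qbinom_expansion]. Qed.
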